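(* Let $G$ be a finite Frobenius group with Frobenius kernel $N$ and Frobenius complement $H$. Then $$|G|A_G(t)=\frac{1}{1-|G|t}+\left(|N|A_N(t)-\frac{1}{1-|N|t}\right)+|N|\left(|H|A_H(t)-\frac{1}{1-|H|t}\right).$$
   Context: A finite group $G$ is a Frobenius group if it has a proper non-trivial subgroup $H$ (a Frobenius complement) such that $H\cap gHg^{-1}=\{1\}$ for all $g\in G\setminus H$; the Frobenius kernel is $N=\left(G\setminus\bigcup_{g\in G}gHg^{-1}\right)\cup\{1\}$, which is a normal subgroup with $G=N\rtimes H$. For a finite group $G$ and $n\ge0$, let $\alpha_{G,n}$ be the number of orbits of $G$ acting on $G^n$ by simultaneous conjugation, and $A_G(t)=\sum_{n\ge0}\alpha_{G,n}t^n$. *)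

From mathcomp Require Import all_boot all_algebra all_fingroup all_solvable frobenius.
Set Implicit Arguments. Unset Strict Implicit. Unset Printing Implicit Defensive.
Local Open Scope group_scope.

Section Defs.
Variable gT : finGroupType.

Definition tuples_in (A : {set gT}) (n : nat) : {set {ffun 'I_n -> gT}} :=
  [set t : {ffun 'I_n -> gT} | [forall i, t i \in A]].

Definition conj_tuple n (t : {ffun 'I_n -> gT}) (g : gT) : {ffun 'I_n -> gT} :=
  [ffun i => t i ^ g].

Definition alpha (A : {set gT}) (n : nat) : nat :=
  #| [set [set conj_tuple t g | g in A] | t in tuples_in A n] |.

(* The Frobenius kernel as defined in the paper:
   (G \ union of conjugates of H) union {1} *)
Definition frob_kernel (G H : {set gT}) : {set gT} :=
  (G :\: \bigcup_(g in G) (H :^ g)) :|: [set 1].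
End Defs.

From mathcomp Require Import all_boot all_algebra all_fingroup all_solvable frobenius.
From mathcomp Require Import vcharacter ring.
Set Implicit Arguments. Unset Strict Implicit. Unset Printing Implicit Defensive.
Import GRing.Theory.
Local Open Scope group_scope.

(* By the Cauchy-Frobenius (Burnside) lemma, |A| alpha_{A,n} is the sum over
   x in A of |C_A(x)|^n, the number of n-tuples fixed by x.  A Frobenius group
   G = K >< H is the disjoint union of K and of the |K| conjugates of H^# by
   elements of K, and the centraliser in G of a nontrivial element of K
   (resp. H) lies in K (resp. H).  Splitting the sum for G along this
   partition gives the identity coefficientwise. *)

Section ConjTupleAction.
Variables (gT : finGroupType) (n : nat).

Lemma conj_tuple1 (t : {ffun 'I_n -> gT}) : conj_tuple t 1 = t.
Proof. by apply/ffunP=> i; rewrite ffunE conjg1. Qed.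

Lemma conj_tupleM (t : {ffun 'I_n -> gT}) a b :
  conj_tuple t (a * b) = conj_tuple (conj_tuple t a) b.
Proof. by apply/ffunP=> i; rewrite !ffunE conjgM. Qed.

Definition conj_tuple_action := TotalAction conj_tuple1 conj_tupleM.

Lemma acts_conj_tuple (A : {group gT}) :
  [acts A, on tuples_in A n | conj_tuple_action].
Proof.
apply/subsetP=> a Aa; rewrite !inE; apply/subsetP=> t.
by rewrite !inE => /forallP tA; apply/forallP=> i; rewrite ffunE groupJ.
Qed.

Lemma afix_conj_tuple (A : {group gT}) a :
  'Fix_(tuples_in A n | conj_tuple_action)[a] = [set t | t \in ffun_on 'C_A[a]].
Proof.
have fixJ x : (x ^ a == x) = (x \in 'C[a]) by rewrite conjg_fix; apply/commgP/cent1P.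
apply/setP=> t; rewrite !inE sub1set inE /=.
apply/andP/ffun_onP => [[/forallP tA /eqP tJ] i | tC].
  by rewrite inE tA -fixJ -{2}tJ ffunE eqxx.
split; first by apply/forallP=> i; have /setIP[] := tC i.
by apply/eqP/ffunP=> i; rewrite ffunE; apply/eqP; rewrite fixJ; case/setIP: (tC i).
Qed.

Lemma card_mul_alpha (A : {group gT}) :
  (#|A| * alpha A n = \sum_(a in A) #|'C_A[a]| ^ n)%N.
Proof.
have := Frobenius_Cauchy (acts_conj_tuple A); rewrite mulnC => <-.
apply: eq_bigr => a _.
by rewrite afix_conj_tuple cardsE card_ffun_on card_ord.
Qed.

Lemma card_mul_alpha_setD1 (A : {group gT}) :
  (#|A| * alpha A n = #|A| ^ n + \sum_(a in A^#) #|'C_A[a]| ^ n)%N.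
Proof. by rewrite card_mul_alpha (big_setD1 1) //= cent11T setIT. Qed.

End ConjTupleAction.

Section FrobeniusSums.
Variables (gT : finGroupType) (G H K : {group gT}).
Hypothesis frobG : [Frobenius G = K ><| H].

Let defG : K ><| H = G. Proof. by case/Frobenius_context: frobG. Qed.
Let ctxG := sdprod_context defG.

Lemma Frobenius_ker_conj_compl_TI g : g \in G -> K :&: H :^ g = 1.
Proof.
have [/andP[_ nKG] _ _ _ tiKH] := ctxG.
by move=> Gg; rewrite -{1}(normsP nKG g Gg) -conjIg tiKH conjs1g.
Qed.

Lemma Frobenius_compl_conj_cover : G :\: K \subset \bigcup_(k in K) H :^ k.
Proof.
have partG := Frobenius_partition frobG.
apply/subsetP=> x /setDP[Gx K'x].
rewrite -(cover_partition partG) in Gx.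
have /bigcupP[B /setU1P[-> | /imsetP[k Kk ->]] Bx] := Gx; first by rewrite Bx in K'x.
by apply/bigcupP; exists k; rewrite // conjD1g in Bx; case/setD1P: Bx.
Qed.

Lemma frob_kernelE : frob_kernel G H = K.
Proof.
have [/andP[sKG _] _ _ _ _] := ctxG.
apply/setP=> x; rewrite !inE; have [-> | ntx] := eqVneq x 1; first by rewrite !group1 orbT.
rewrite orbF; apply/andP/idP=> [[notHx Gx] | Kx].
  apply: contraR notHx => K'x.
  have /bigcupP[k Kk Hkx]: x \in \bigcup_(k in K) H :^ k.
    by apply: (subsetP Frobenius_compl_conj_cover); rewrite inE K'x.
  by apply/bigcupP; exists k; rewrite ?(subsetP sKG).
split; last exact: (subsetP sKG).
apply/bigcupP=> [[g Gg Hgx]]; case/eqP: ntx.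
have: x \in K :&: H :^ g by rewrite inE Kx.
by rewrite Frobenius_ker_conj_compl_TI // => /set1P.
Qed.

Lemma Frobenius_cent1_kerE x : x \in K^# -> 'C_G[x] = 'C_K[x].
Proof.
have [/andP[sKG _] _ _ _ _] := ctxG.
move=> Kx; rewrite -(setIidPr (Frobenius_cent1_ker frobG Kx)).
by rewrite setIA (setIidPl sKG).
Qed.

Lemma Frobenius_cent1_complE y : y \in H^# -> 'C_G[y] = 'C_H[y].
Proof.
have [_ sHG _ _ _] := ctxG; have /andP[_ tiHG] := FrobeniusWcompl frobG.
move=> Hy; rewrite -(setIidPr (cent1_normedTI tiHG Hy)).
by rewrite setIA (setIidPl sHG).
Qed.

Lemma card_Frobenius_compl_conjugates : #|H^# :^: K| = #|K|.
Proof.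
have [/andP[sKG _] _ _ _ tiKH] := ctxG.
have /andP[_ /and3P[_ _ /eqP nHG]] := FrobeniusWcompl frobG.
have nKH1: 'N_K(H^#) = 1.
  by apply/trivgP; rewrite -tiKH subsetI subsetIl -{2}nHG setSI.
by rewrite card_conjugates nKH1 indexg1.
Qed.

Lemma Frobenius_sum_conj_invariant (F : gT -> nat) :
    {in H^# & K, forall y k, F (y ^ k) = F y} ->
  (\sum_(x in G) F x = \sum_(x in K) F x + #|K| * \sum_(y in H^#) F y)%N.
Proof.
move=> FJ; have partG := Frobenius_partition frobG; have [_ tiP _] := and3P partG.
have K_notin_HK : gval K \notin H^# :^: K.
  by apply/imsetP=> [[k _ defK]]; have := group1 K; rewrite defK conjD1g !inE eqxx.
rewrite -{1}(cover_partition partG) big_trivIset // big_setU1 //=; congr (_ + _)%N.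
rewrite -card_Frobenius_compl_conjugates -sum_nat_const.
apply: eq_bigr => _ /imsetP[k Kk ->].
rewrite /conjugate big_imset /=; last by move=> y z _ _; apply: conjg_inj.
by apply: eq_bigr => y Hy; apply: FJ.
Qed.

Lemma Frobenius_card_mul_alpha n :
  (#|G| * alpha G n + #|K| ^ n + #|K| * #|H| ^ n
    = #|G| ^ n + #|K| * alpha K n + #|K| * (#|H| * alpha H n))%N.
Proof.
have [/andP[sKG _] _ _ _ _] := ctxG.
rewrite card_mul_alpha (Frobenius_sum_conj_invariant (F := fun x => #|'C_G[x]| ^ n)%N).
  rewrite (big_setD1 1) //= cent11T setIT !card_mul_alpha_setD1.
  under eq_bigr => x Kx do rewrite Frobenius_cent1_kerE //.
  under [in X in (_ * X)%N]eq_bigr => y Hy do rewrite Frobenius_cent1_complE //.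
  ring.
move=> y k _ /(subsetP sKG) Gk /=.
by rewrite cent1J -{1}(conjGid Gk) -conjIg cardJg.
Qed.

End FrobeniusSums.

Theorem theorem9p2 (gT : finGroupType) (G H : {group gT}) :
  [Frobenius G with complement H]%g ->
  let N := frob_kernel G H in
  forall n : nat,
    ((#|G| * alpha G n)%N%:Z =
      (#|G| ^ n)%N%:Z
      + ((#|N| * alpha N n)%N%:Z - (#|N| ^ n)%N%:Z)
      + (#|N|)%:Z * ((#|H| * alpha H n)%N%:Z - (#|H| ^ n)%N%:Z))%R.
Proof.
move=> frobG N n; have [K frobK] := Frobenius_kernel_exists frobG.
rewrite /N (frob_kernelE frobK); have := Frobenius_card_mul_alpha frobK n.
move/(congr1 Posz); rewrite !PoszD !PoszM => sum_eq.
apply: (addIr ((#|K| ^ n)%N%:Z + #|K| * (#|H| ^ n)%N)%R).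
by rewrite [LHS]addrA sum_eq; ring.
Qed.
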